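(* For every (possibly stochastic) local policy S-Local there exists a collectible reward decomposition MDP with $n$ rewards and discount factor $\gamma=1-1/\sqrt{n}$ such that $\frac{\text{S-Local}}{\text{OPT}}\le\frac{8}{\sqrt{n}}$, where S-Local denotes the expected value of the policy on that MDP.
   Context: A collectible reward decomposition MDP is an MDP with deterministic dynamics, an initial state $s_0$, discount $\gamma$, and $n$ reward states $s_1,\dots,s_n$; visiting $s_i$ for the first time yields reward $1$ and each reward can be collected only once. For each $j$ there is an option $o_j$ that follows a shortest path to $s_j$ and terminates when collecting it; its value from state $x$ is $V_j(x)=\gamma^{d(x,s_j)}$ where $d$ is shortest-path distance. A local policy is a mapping $\pi(x,h,\{V_i(x)\}_{i=1}^n)\to\Delta(\{o_i\}_{i=1}^n)$ from the current state $x$, the history $h$ of previous steps (including which rewards were collected) and the option values at $x$, to a distribution over options. The value of a policy is its expected discounted return $\mathbb{E}\sum_k\gamma^{T_k}$ ($T_k$ the time the $k$-th reward is collected), and $\text{OPT}=\max_{(i_1,\dots,i_n)}\sum_{j=0}^{n-1}\gamma^{\sum_{t=0}^{j}d_{i_t,i_{t+1}}}$ with $i_0=s_0$. *)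

From HB Require Import structures.
From mathcomp Require Import all_boot all_order all_algebra.
From mathcomp Require Import fingroup perm.
From mathcomp Require Import boolp classical_sets reals.
Set Implicit Arguments. Unset Strict Implicit. Unset Printing Implicit Defensive.
Import Order.TTheory GRing.Theory Num.Theory.
Local Open Scope ring_scope.
Local Open Scope classical_set_scope.

(* States are 'I_nst; the deterministic dynamics is given by the list of
   states reachable in one step (one per action) [succ x].  [init] is s_0,
   [rst j] is the reward state s_j, and [nxt x j] is the next state taken by
   option o_j from x (the option follows a shortest path to s_j). *)
Record crmdp (n : nat) := CRMDP {
  nst  : nat;
  succ : 'I_nst -> seq 'I_nst;
  init : 'I_nst;
  rst  : 'I_n -> 'I_nst;
  nxt  : 'I_nst -> 'I_n -> 'I_nst }.
Arguments succ {n} c _.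
Arguments nxt {n} c _ _.
Arguments rst {n} c _.
Arguments init {n} c.

Section Graph.
Variables (n : nat) (M : crmdp n).

Fixpoint reach (k : nat) (x y : 'I_(nst M)) : bool :=
  if k is k'.+1 then (x == y) || has (fun z => reach k' z y) (succ M x)
  else x == y.

(* shortest-path distance (a finite graph with nst states: shortest paths
   have length < nst) *)
Definition dist (x y : 'I_(nst M)) : nat :=
  find (fun k => reach k x y) (iota 0 (nst M)).

Definition valid_crmdp : Prop :=
  injective (rst M) /\
  (forall x j, exists k, reach k x (rst M j)) /\
  (forall x j, (0 < dist x (rst M j))%N ->
      nxt M x j \in succ M x /\
      dist (nxt M x j) (rst M j) = (dist x (rst M j)).-1).

(* states visited (times 1..d) when running option o_j from x *)
Definition opath (x : 'I_(nst M)) (j : 'I_n) : seq 'I_(nst M) :=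
  [seq iter k.+1 (fun y => nxt M y j) x | k <- iota 0 (dist x (rst M j))].

End Graph.
Arguments reach {n} M k x y.
Arguments dist {n} M x y.
Arguments opath {n} M x j.
Arguments valid_crmdp {n} M.

(* One entry of the history: decision state, option values observed there,
   option chosen, states traversed by the option, rewards collected so far
   after the option terminated. *)
Record hentry (R : Type) (n : nat) := HEntry {
  h_state : nat;
  h_vals  : {ffun 'I_n -> R};
  h_opt   : 'I_n;
  h_path  : seq nat;
  h_coll  : {set 'I_n} }.

(* A (possibly stochastic) local policy: from the current state x, the
   history h (with the set of already collected rewards) and the option
   values {V_i(x)}, a probability distribution over the options o_1..o_n. *)
Record local_policy (R : numDomainType) (n : nat) := LocalPolicy {
  lpol :> nat -> seq (hentry R n) -> {set 'I_n} -> {ffun 'I_n -> R} ->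
          {ffun 'I_n -> R};
  lpol_ge0 : forall x h C v i, 0 <= lpol x h C v i;
  lpol_sum1 : forall x h C v, \sum_i lpol x h C v i = 1 }.

Definition disc (R : realType) (n : nat) : R := 1 - (Num.sqrt (n%:R))^-1.

Section Value.
Variables (R : realType) (n : nat) (M : crmdp n) (gamma : R).

Definition optV (x : 'I_(nst M)) (j : 'I_n) : R := gamma ^+ dist M x (rst M j).

(* discounted reward collected (first visits only) while running o_j from x,
   starting at time t with collected set C *)
Definition gain (C : {set 'I_n}) (t : nat) (x : 'I_(nst M)) (j : 'I_n) : R :=
  \sum_(i | (i \notin C) && (rst M i \in opath M x j))
     gamma ^+ (t + (index (rst M i) (opath M x j)).+1).

Definition newC (C : {set 'I_n}) (x : 'I_(nst M)) (j : 'I_n) : {set 'I_n} :=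
  C :|: [set i | rst M i \in opath M x j].

(* expected discounted reward collected during the first K option calls *)
Fixpoint Wk (pi : local_policy R n) (K : nat) (x : 'I_(nst M))
    (h : seq (hentry R n)) (C : {set 'I_n}) (t : nat) : R :=
  if K is K'.+1 then
    let v := [ffun i => optV x i] in
    \sum_j pi (val x) h C v j *
      (gain C t x j +
       Wk pi K' (rst M j)
          (rcons h (HEntry (val x) v j (map val (opath M x j)) (newC C x j)))
          (newC C x j) (t + dist M x (rst M j)))
  else 0.

Definition C0 : {set 'I_n} := [set i | rst M i == init M].

(* expected discounted return  E sum_k gamma^{T_k}  of the policy *)
Definition value (pi : local_policy R n) : R :=
  #|C0|%:R + sup (range (fun K => Wk pi K (init M) [::] C0 0%N)).

Definition tour (s : {perm 'I_n}) : seq 'I_(nst M) :=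
  init M :: [seq rst M (s i) | i <- enum 'I_n].

Definition tour_ret (s : {perm 'I_n}) : R :=
  \sum_(j < n) gamma ^+ (\sum_(t < j.+1)
      dist M (nth (init M) (tour s) t) (nth (init M) (tour s) t.+1)).

Definition OPT : R := \big[Num.max/0]_(s : {perm 'I_n}) tour_ret s.

End Value.
Arguments value {R n} M gamma pi.
Arguments OPT {R n} M gamma.

From HB Require Import structures.
From mathcomp Require Import all_boot all_order all_algebra.
From mathcomp Require Import fingroup perm.
From mathcomp Require Import boolp classical_sets reals.
From mathcomp Require Import zify ring lra.
Set Implicit Arguments. Unset Strict Implicit. Unset Printing Implicit Defensive.
Import Order.TTheory GRing.Theory Num.Theory.

(* In the hard instance all n reward states are one step from s_0.  Listed in a
   cyclic order shifted by w, the first m ~ sqrt n of them form a chain of unit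
   steps, while any other move between reward states costs n + 2 steps (along a
   path back to s_0).  At s_0 every option value is gamma and the history is
   empty, so the policy's first choice is one distribution p whatever w is;
   averaging over the n shifts, some w leaves at most m/n of the p-mass on the
   chain.  Rewards are collected at distinct times, so off the chain the policy
   gets gamma and then nothing before time n + 3, and on it at most
   gamma/(1-gamma): its value is at most 4 gamma, whereas walking the chain
   shows OPT >= sum_{j<m} gamma^(j+1) >= gamma sqrt n / 2. *)

Section NumericFacts.
Local Open Scope ring_scope.

Lemma sumr_le_subset_uniq (R : numDomainType) (I : eqType) (s t : seq I) (F : I -> R) :
  uniq s -> uniq t -> {subset s <= t} -> (forall i, i \in t -> 0 <= F i) ->
  \sum_(i <- s) F i <= \sum_(i <- t) F i.
Proof.
move=> us ut sst F0; rewrite [X in _ <= X](bigID (mem s)) /=.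
have -> : \sum_(i <- t | i \in s) F i = \sum_(i <- s) F i.
  rewrite -big_filter; apply/perm_big/uniq_perm; rewrite ?filter_uniq // => i.
  by rewrite mem_filter andb_idr //; apply: sst.
by rewrite lerDl big_seq_cond sumr_ge0 // => i /andP [/F0].
Qed.

Lemma geom_sum_tail (R : fieldType) (g : R) (t D d : nat) : g != 1 ->
  \sum_(D <= k < d) g ^+ (t + k) + g ^+ (t + maxn d D) / (1 - g)
  = g ^+ (t + D) / (1 - g).
Proof.
move=> g_neq1; have den_neq0 : 1 - g != 0 by rewrite subr_eq0 eq_sym.
elim: d => [|d IH]; first by rewrite big_geq // add0r max0n.
have [Dd|dD] := leqP D d; last first.
  by rewrite big_geq // add0r (maxn_idPr dD).
rewrite big_nat_recr //= -IH (maxn_idPl Dd) (maxn_idPl (leqW Dd)) -addrA.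
by congr (_ + _); rewrite addnS exprS; field.
Qed.

Lemma bernoulli_le1 (R : realFieldType) (x : R) (k : nat) : 0 <= x <= 1 ->
  (1 - x) ^+ k * (1 + k%:R * x) <= 1.
Proof.
move=> /andP [x_ge0 x_le1]; elim: k => [|k IH]; first by rewrite expr0 mul0r addr0 mulr1.
have step : (1 - x) * (1 + k.+1%:R * x) <= 1 + k%:R * x.
  by rewrite -natr1; have := ler0n R k; nra.
apply: le_trans IH; rewrite exprS -mulrA mulrCA.
by rewrite ler_wpM2l ?exprn_ge0 ?subr_ge0.
Qed.

Lemma divr_le_of_le_mul (R : realFieldType) (x y c : R) :
  0 <= c -> 0 <= y -> x <= c * y -> x / y <= c.
Proof.
move=> c_ge0; rewrite le_eqVlt => /predU1P [<- _|y_gt0]; first by rewrite invr0 mulr0.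
by rewrite ler_pdivrMr // mulrC.
Qed.

Lemma exists_nat_sqrt_bracket (R : rcfType) (n : nat) : (0 < n)%N ->
  exists2 m, (m <= n)%N &
    Num.sqrt (n%:R : R) <= m%:R <= 2 * Num.sqrt (n%:R : R).
Proof.
move=> n_gt0; set s := Num.sqrt (n%:R : R).
have s_ge1 : 1 <= s by rewrite -sqrtr1 ler_sqrt ?ler1n.
have le_nat_sqrt (a : nat) : (s <= a%:R) = (n <= a * a)%N.
  rewrite -[a%:R]ger0_norm ?ler0n // -sqrtr_sqr ler_sqrt ?exprn_ge0 ?ler0n //.
  by rewrite -natrX ler_nat mulnn.
have [m n_le_mm m_min] := ex_minnP (ex_intro (fun k => n <= k * k)%N n (leq_pmulr n n_gt0)).
exists m; first by apply: m_min; rewrite leq_pmulr.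
rewrite le_nat_sqrt n_le_mm /=.
case: m n_le_mm m_min => [|k] n_le_mm k_min; first by move: n_le_mm; rewrite muln0; lia.
have : ~~ (s <= k%:R) by rewrite le_nat_sqrt; apply/negP => /k_min; lia.
by rewrite -ltNge -natr1; lra.
Qed.

Lemma exists_le_mean (R : realFieldType) (I : finType) (F : I -> R) :
  (0 < #|I|)%N -> exists i, F i <= (\sum_i F i) / #|I|%:R.
Proof.
move=> I0; apply: contrapT => noi.
have : \sum_(i : I) ((\sum_i F i) / #|I|%:R) < \sum_i F i.
  apply: ltr_sum => [|i _]; last by rewrite ltNge; apply/negP => Fi; apply: noi; exists i.
  by case/card_gt0P: I0 => i _; apply/hasP; exists i; rewrite ?mem_index_enum.
by rewrite sumr_const -[_ *+ _]mulr_natr divfK ?ltxx // pnatr_eq0 -lt0n.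
Qed.

End NumericFacts.

Section Reachability.
Variables (n : nat) (M : crmdp n).
Implicit Types (x y z : 'I_(nst M)) (k : nat).

Lemma reach_refl k x : reach M k x x.
Proof. by case: k => [|k] /=; rewrite eqxx. Qed.

Lemma reachS k x y : reach M k x y -> reach M k.+1 x y.
Proof.
elim: k x => [|k IH] x /=; first by move->.
by case/orP=> [->//|/(sub_has IH) ->]; rewrite orbT.
Qed.

Lemma reach_le k k' x y : k <= k' -> reach M k x y -> reach M k' x y.
Proof.
move=> /subnK <-; elim: (k' - k) => // d IH /IH.
by rewrite addSn; apply: reachS.
Qed.

Lemma reach_trans a b x y z :
  reach M a x y -> reach M b y z -> reach M (a + b) x z.
Proof.
elim: a x => [|a IH] x /=; first by move/eqP->.
case/orP=> [/eqP-> reach_yz|/hasP [u u_succ reach_uy] reach_yz].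
  exact: reach_le (leq_addl a.+1 b) reach_yz.
by apply/orP; right; apply/hasP; exists u => //; apply: IH.
Qed.

Lemma reach_succ x z : z \in succ M x -> reach M 1 x z.
Proof. by move=> z_succ /=; apply/orP; right; apply/hasP; exists z; rewrite //= eqxx. Qed.

Lemma dist_le_reach k x y : reach M k x y -> dist M x y <= k.
Proof.
move=> reach_k; rewrite /dist; set P := fun k => reach M k x y.
have [ltkN|] := ltnP k (nst M); last first.
  by apply: leq_trans; rewrite -[X in _ <= X](size_iota 0) find_size.
rewrite leqNgt; apply/negP => /(before_find 0).
by rewrite nth_iota // add0n [P k]reach_k.
Qed.

Lemma dist_eq0 x y : dist M x y = 0 -> x = y.
Proof.
rewrite /dist => d0.
have nst_gt0 : 0 < nst M by apply: leq_ltn_trans (ltn_ord x).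
have : has (fun k => reach M k x y) (iota 0 (nst M)) by rewrite has_find d0 size_iota.
by move/(nth_find 0); rewrite d0 nth_iota //= => /eqP.
Qed.

Section Potential.
Variables (y : 'I_(nst M)) (delta : 'I_(nst M) -> nat) (step : 'I_(nst M) -> 'I_(nst M)).
Hypothesis delta_eq0 : forall x, delta x = 0 -> x = y.
Hypothesis step_succ : forall x, 0 < delta x -> step x \in succ M x.
Hypothesis delta_step : forall x, 0 < delta x -> delta (step x) = (delta x).-1.

Lemma reach_potential x : reach M (delta x) x y.
Proof.
move dE: (delta x) => d; elim: d x dE => [|d IH] x dE.
  by rewrite (delta_eq0 dE) reach_refl.
have dx_gt0 : 0 < delta x by rewrite dE.
rewrite -add1n; apply: reach_trans (reach_succ (step_succ dx_gt0)) (IH _ _).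
by rewrite delta_step dE.
Qed.

Hypothesis delta_y : delta y = 0.
Hypothesis delta_succ : forall x z, z \in succ M x -> delta x <= (delta z).+1.
Hypothesis delta_lt : forall x, delta x < nst M.

Lemma dist_potential x : dist M x y = delta x.
Proof.
have delta_le k x' : reach M k x' y -> delta x' <= k.
  elim: k x' => [|k IH] x' /=; first by move/eqP->; rewrite delta_y.
  case/orP=> [/eqP->|/hasP [z z_succ /IH delta_z]]; first by rewrite delta_y.
  by rewrite (leq_trans (delta_succ z_succ)) ?ltnS.
apply/eqP; rewrite eqn_leq dist_le_reach ?reach_potential //=.
have reachable : has (fun k => reach M k x y) (iota 0 (nst M)).
  by apply/hasP; exists (delta x); rewrite ?mem_iota ?delta_lt ?reach_potential.
apply: delta_le; have := nth_find 0 reachable; rewrite nth_iota ?add0n //.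
by move: reachable; rewrite has_find size_iota.
Qed.

End Potential.

Section Options.
Variables (j : 'I_n) (x : 'I_(nst M)).
Hypothesis V : valid_crmdp M.
Let option_step y := nxt M y j.

Lemma dist_iter_option k : k <= dist M x (rst M j) ->
  dist M (iter k option_step x) (rst M j) = dist M x (rst M j) - k /\
  reach M k x (iter k option_step x).
Proof.
case: V => _ [_ valid_step].
elim: k => [|k IH] k_lt; first by rewrite /= subn0 eqxx.
have [dE reach_k] := IH (ltnW k_lt).
have d_gt0 : 0 < dist M (iter k option_step x) (rst M j) by rewrite dE subn_gt0.
have [step_succ step_dist] := valid_step _ _ d_gt0.
rewrite iterS; split; first by rewrite step_dist dE; lia.
by rewrite -addn1; apply: reach_trans reach_k (reach_succ step_succ).
Qed.

Lemma iter_option_dist : iter (dist M x (rst M j)) option_step x = rst M j.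
Proof.
have [dE _] := dist_iter_option (leqnn (dist M x (rst M j))).
by apply: dist_eq0; rewrite dE subnn.
Qed.

Lemma reach_dist_rst : reach M (dist M x (rst M j)) x (rst M j).
Proof.
have [_ reach_end] := dist_iter_option (leqnn (dist M x (rst M j))).
by rewrite iter_option_dist in reach_end.
Qed.

End Options.
End Reachability.

Section FarRewards.
Variables (n : nat) (M : crmdp n).
Local Notation d x j := (dist M x (rst M j)).

Definition far_rewards (x : 'I_(nst M)) (C : {set 'I_n}) (D : nat) :=
  forall i, i \notin C -> D <= d x i.

Hypothesis V : valid_crmdp M.

Lemma far_rewards_newC x C D j : 0 < D -> far_rewards x C D ->
  far_rewards (rst M j) (newC C x j) (maxn 1 (D - d x j)).
Proof.
move=> D0 farD i; rewrite finset.in_setU finset.in_set negb_or => /andP [iC iP].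
have Dle : D <= d x j + d (rst M j) i.
  apply: leq_trans (farD _ iC) (dist_le_reach _).
  exact: reach_trans (reach_dist_rst j x V) (reach_dist_rst i (rst M j) V).
suff : 0 < d (rst M j) i by lia.
rewrite lt0n; apply: contraNneq iP => /dist_eq0 eq_ji.
case dE: (d x j) => [|k].
  by have := farD _ iC; rewrite -eq_ji dE leqNgt D0.
apply/mapP; exists k; first by rewrite mem_iota dE; lia.
by rewrite -eq_ji -dE iter_option_dist.
Qed.

End FarRewards.

(* States of the hard instance: 0 is s_0, k in 1..n is the reward at position
   k - 1, and n + 1, ..., n + n is the path back to 0.  The rewards 1..m form
   the chain k -> k + 1, and every reward has an edge to n + 1. *)
Definition hard_edge (n m x y : nat) : bool :=
  [|| (x == 0) && (0 < y <= n),
      [&& 0 < x, x <= n & (x < m) && (y == x.+1) || (y == n.+1)],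
      [&& n < x, x < n + n & y == x.+1] |
      (x == n + n) && (y == 0)].

Definition hard_dist (n m x tau : nat) : nat :=
  if x == 0 then 1
  else if x <= n then
    (if x == tau then 0 else if (x < tau) && (tau <= m) then tau - x else n.+2)
  else (n + n - x).+2.

Definition hard_next (n m x tau : nat) : nat :=
  if x == 0 then tau
  else if x <= n then (if (x < tau) && (tau <= m) then x.+1 else n.+1)
  else if x < n + n then x.+1 else 0.

Section HardGraph.
Variables (n m tau : nat).
Hypotheses (n_gt0 : 0 < n) (m_le_n : m <= n) (tau_gt0 : 0 < tau) (tau_le_n : tau <= n).
Local Notation hd x := (hard_dist n m x tau).
Local Notation hnext x := (hard_next n m x tau).

(* Splitting [hard_next] first keeps nested [if]s, which [lia] cannot read, out
   of the conditions of [hard_dist]. *)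
Ltac hard_cases := rewrite /hard_next; repeat case: ifP => ?;
  rewrite /hard_dist /hard_edge /=; repeat case: ifP => ?; lia.

Lemma hard_dist_eq0 x : hd x = 0 -> x = tau.
Proof. hard_cases. Qed.

Lemma hard_dist_target : hd tau = 0.
Proof. hard_cases. Qed.

Lemma hard_dist_le x : hd x <= n + n.
Proof. hard_cases. Qed.

Lemma hard_dist_edge x z : hard_edge n m x z -> hd x <= (hd z).+1.
Proof. hard_cases. Qed.

Lemma hard_next_le x : hnext x <= n + n.
Proof. hard_cases. Qed.

Lemma hard_next_edge x : x <= n + n -> hard_edge n m x (hnext x).
Proof. hard_cases. Qed.

Lemma hard_dist_next x : 0 < hd x -> hd (hnext x) = (hd x).-1.
Proof. hard_cases. Qed.

Lemma hard_dist_between x : 0 < x <= n -> x != tau ->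
  (if x <= m then 1 else n.+2) <= hd x.
Proof. hard_cases. Qed.

End HardGraph.

Lemma hard_edge_chain (n m t : nat) : m <= n -> t < m -> hard_edge n m t t.+1.
Proof. rewrite /hard_edge; lia. Qed.

Section HardInstance.
Variables (n m w : nat).
Hypotheses (n_gt0 : 0 < n) (m_le_n : m <= n).

Definition hard_pos (j : 'I_n) : nat := (j + w) %% n.

Lemma hard_pos_lt j : hard_pos j < n.
Proof. exact: ltn_pmod. Qed.

Lemma hard_pos_inj : injective hard_pos.
Proof.
move=> j j' /eqP; rewrite /hard_pos eqn_modDr !modn_small // => /eqP.
exact: val_inj.
Qed.

Definition hard_mdp : crmdp n :=
  @CRMDP n (n + n).+1
    (fun x => [seq y : 'I_(n + n).+1 <- enum 'I_(n + n).+1 | hard_edge n m x y])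
    (inord 0) (fun j => inord (hard_pos j).+1)
    (fun x j => inord (hard_next n m x (hard_pos j).+1)).

Local Notation hd j x := (hard_dist n m x (hard_pos j).+1).

Lemma val_hard_init : init hard_mdp = 0 :> nat.
Proof. by rewrite /= inordK. Qed.

Lemma val_hard_rst j : rst hard_mdp j = (hard_pos j).+1 :> nat.
Proof. by rewrite /= inordK // ltnS (leq_trans (hard_pos_lt j)) ?leq_addr. Qed.

Lemma hard_succE (x z : 'I_(nst hard_mdp)) : (z \in succ hard_mdp x) = hard_edge n m x z.
Proof. by rewrite mem_filter mem_enum andbT. Qed.

Section Target.
Variable j : 'I_n.
Let tau_gt0 : 0 < (hard_pos j).+1. Proof. by []. Qed.
Let tau_le_n : (hard_pos j).+1 <= n. Proof. exact: hard_pos_lt. Qed.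
Implicit Types x : 'I_(nst hard_mdp).

Lemma val_hard_nxt x :
  nxt hard_mdp x j = hard_next n m x (hard_pos j).+1 :> nat.
Proof. by rewrite /= inordK // ltnS hard_next_le. Qed.

Lemma hard_dist_rst_eq0 x : hd j x = 0 -> x = rst hard_mdp j.
Proof.
by move=> /hard_dist_eq0 xE; apply: ord_inj; rewrite val_hard_rst; apply: xE.
Qed.

Lemma hard_nxt_succ x : nxt hard_mdp x j \in succ hard_mdp x.
Proof. by rewrite hard_succE val_hard_nxt hard_next_edge // -ltnS. Qed.

Lemma hard_dist_nxt x : 0 < hd j x -> hd j (nxt hard_mdp x j) = (hd j x).-1.
Proof. by move=> ?; rewrite val_hard_nxt hard_dist_next. Qed.

Lemma hard_mdp_dist x : dist hard_mdp x (rst hard_mdp j) = hd j x.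
Proof.
apply: (dist_potential (delta := fun y => hd j y) (step := nxt hard_mdp ^~ j)) => [y|y|y|||y].
- exact: hard_dist_rst_eq0.
- by move=> _; apply: hard_nxt_succ.
- exact: hard_dist_nxt.
- by rewrite val_hard_rst hard_dist_target.
- by move=> y z; rewrite hard_succE => /hard_dist_edge; apply.
- by rewrite ltnS hard_dist_le.
Qed.

End Target.

Lemma hard_mdp_valid : valid_crmdp hard_mdp.
Proof.
split; [|split].
- move=> j j' /(congr1 (@nat_of_ord _)); rewrite !val_hard_rst => -[].
  exact: hard_pos_inj.
- move=> x j; exists (hd j x).
  apply: (reach_potential (delta := fun y => hd j y) (step := nxt hard_mdp ^~ j)) => y.
  + exact: hard_dist_rst_eq0.
  + by move=> _; apply: hard_nxt_succ.
  + exact: hard_dist_nxt.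
- move=> x j; rewrite hard_mdp_dist => dpos.
  by rewrite hard_nxt_succ hard_mdp_dist hard_dist_nxt.
Qed.

End HardInstance.

Local Open Scope ring_scope.

Section ReturnBound.
Variables (R : realType) (n : nat) (M : crmdp n) (g : R).
Hypotheses (V : valid_crmdp M) (g_ge0 : 0 <= g) (g_lt1 : g < 1).
Local Notation d x j := (dist M x (rst M j)).

Lemma gain_le_geom C t x j D : far_rewards x C D ->
  gain g C t x j <= \sum_(D <= k < (d x j).+1) g ^+ (t + k).
Proof.
move=> farD; set P := opath M x j.
have Psz : size P = d x j by rewrite size_map size_iota.
pose idx i := (index (rst M i) P).+1.
have idx_bound i : i \notin C -> rst M i \in P -> (D <= idx i <= d x j)%N.
  move=> iC iP; have ltid : (idx i <= d x j)%N by rewrite -Psz index_mem.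
  rewrite ltid andbT (leq_trans (farD _ iC)) // dist_le_reach //.
  have [_ +] := dist_iter_option V ltid.
  rewrite -(nth_index x iP) /P /opath (nth_map 0%N) ?nth_iota //.
  by rewrite size_iota; exact: ltid.
rewrite /gain -big_filter -(big_map idx xpredT (fun k => g ^+ (t + k))).
apply: sumr_le_subset_uniq => [||k|k _]; rewrite ?exprn_ge0 ?iota_uniq //.
  rewrite map_inj_in_uniq ?filter_uniq ?index_enum_uniq // => i i'.
  rewrite !mem_filter => /andP [/andP [_ iP] _] /andP [/andP [_ i'P] _] [] eqi.
  by apply: (proj1 V); rewrite -(nth_index x iP) -(nth_index x i'P) eqi.
case/mapP => i; rewrite mem_filter => /andP [/andP [iC iP] _] ->.
by rewrite mem_index_iota ltnS idx_bound.
Qed.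

Lemma Wk_le_geom (pi : local_policy R n) K (x : 'I_(nst M)) h C t D :
  (0 < D)%N -> far_rewards x C D -> Wk g pi K x h C t <= g ^+ (t + D) / (1 - g).
Proof.
elim: K x h C t D => [|K IH] x h C t D D0 farD /=.
  by rewrite divr_ge0 ?exprn_ge0 // subr_ge0 ltW.
set v := [ffun i => optV g x i].
apply: le_trans (_ : \sum_j pi (val x) h C v j * (g ^+ (t + D) / (1 - g)) <= _).
  apply: ler_sum => j _; apply: ler_wpM2l; first exact: lpol_ge0.
  rewrite -(geom_sum_tail t D (d x j).+1) ?lt_eqF //.
  apply: lerD; first exact: gain_le_geom.
  have -> : (t + maxn (d x j).+1 D = (t + d x j) + maxn 1 (D - d x j))%N by lia.
  by apply: IH; [exact: leq_maxl | exact: far_rewards_newC].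
by rewrite -mulr_suml lpol_sum1 mul1r.
Qed.

End ReturnBound.

Section HardValue.
Variables (R : realType) (n m w : nat) (g : R) (pi : local_policy R n).
Hypotheses (n_gt0 : (0 < n)%N) (m_le_n : (m <= n)%N) (g_ge0 : 0 <= g) (g_lt1 : g < 1).
Local Notation H := (hard_mdp n m w).
Local Notation s0 := (init H).

Definition first_choice : {ffun 'I_n -> R} := pi 0%N [::] finset.set0 [ffun=> g].

Lemma hard_dist_init j : dist H s0 (rst H j) = 1%N.
Proof. by rewrite hard_mdp_dist // val_hard_init. Qed.

Lemma C0_hard : C0 H = finset.set0.
Proof.
apply/finset.setP => i; rewrite finset.in_set finset.in_set0.
by apply/negbTE/eqP => /(congr1 (@nat_of_ord _)); rewrite val_hard_rst ?val_hard_init.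
Qed.

Lemma hard_opath_init j : opath H s0 j = [:: rst H j].
Proof.
have := iter_option_dist j s0 (hard_mdp_valid w n_gt0 m_le_n).
by rewrite /opath hard_dist_init => /= ->.
Qed.

Definition first_gap (j : 'I_n) : nat := if (hard_pos w j < m)%N then 1%N else n.+2.

Lemma hard_far_after_first j :
  far_rewards (rst H j) (newC finset.set0 s0 j) (first_gap j).
Proof.
move=> i; rewrite /newC hard_opath_init finset.in_setU finset.in_set0.
rewrite finset.in_set mem_seq1 => ij.
rewrite hard_mdp_dist // val_hard_rst // /first_gap.
apply: (hard_dist_between n_gt0 m_le_n) => //; rewrite ?hard_pos_lt //.
by rewrite eqSS; apply: contra ij => /eqP /hard_pos_inj ->; rewrite eqxx.
Qed.

Lemma hard_first_return K h j :
  gain g finset.set0 0 s0 j +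
  Wk g pi K (rst H j) h (newC finset.set0 s0 j) (0 + dist H s0 (rst H j))
  <= g + g ^+ (1 + first_gap j) / (1 - g).
Proof.
have V := hard_mdp_valid w n_gt0 m_le_n.
have far_init : far_rewards s0 finset.set0 1 by move=> i _; rewrite hard_dist_init.
apply: lerD.
  by apply: le_trans (gain_le_geom V g_ge0 0 j far_init) _; rewrite hard_dist_init big_nat1.
rewrite hard_dist_init; apply: Wk_le_geom => //; last exact: hard_far_after_first.
by rewrite /first_gap; case: ifP.
Qed.

Lemma hard_value_le :
  value H g pi <= g + g ^+ n.+3 / (1 - g) +
    (\sum_(j | (hard_pos w j < m)%N) first_choice j) * (g ^+ 2 / (1 - g)).
Proof.
have pow_div_ge0 k : 0 <= g ^+ k / (1 - g).
  by rewrite mulr_ge0 ?exprn_ge0 // invr_ge0 subr_ge0 ltW.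
rewrite /value C0_hard finset.cards0 add0r; apply: ge_sup.
  by exists (Wk g pi 0 s0 [::] finset.set0 0); exists 0%N.
move=> _ [[|K] _ <-]; cbn [Wk].
  have q_ge0 : 0 <= \sum_(j | (hard_pos w j < m)%N) first_choice j.
    by rewrite sumr_ge0 // => j _; apply: lpol_ge0.
  by apply: addr_ge0; [apply: addr_ge0 | apply: mulr_ge0]; rewrite ?pow_div_ge0.
have -> : [ffun i => optV g s0 i] = [ffun=> g].
  by apply/ffunP => i; rewrite !ffunE /optV hard_dist_init.
have -> : val s0 = 0%N by apply: val_hard_init.
apply: le_trans (_ : \sum_j first_choice j * (g + g ^+ n.+3 / (1 - g) +
    (if (hard_pos w j < m)%N then g ^+ 2 / (1 - g) else 0)) <= _).
  apply: ler_sum => j _; rewrite ler_wpM2l ?lpol_ge0 //.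
  apply: le_trans (hard_first_return K _ j) _; rewrite -addrA lerD2l /first_gap.
  case: ifP => _; last by rewrite addr0 add1n.
  by rewrite addn1 ler_wpDl.
under eq_bigr do rewrite mulrDr (fun_if (GRing.mul _)) mulr0.
by rewrite big_split /= -mulr_suml lpol_sum1 mul1r -big_mkcond -mulr_suml.
Qed.

End HardValue.

Section HardOPT.
Variables (R : realType) (n m w : nat) (g : R).
Hypotheses (n_gt0 : (0 < n)%N) (m_le_n : (m <= n)%N) (g_ge0 : 0 <= g) (g_le1 : g <= 1).
Local Notation H := (hard_mdp n m w).

Definition hard_ord (j : 'I_n) : 'I_n := Ordinal (hard_pos_lt w n_gt0 j).

Lemma hard_ord_inj : injective hard_ord.
Proof. by move=> j j' /(congr1 val) /hard_pos_inj. Qed.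

Definition hard_tour : {perm 'I_n} := ((perm hard_ord_inj)^-1)%g.

Lemma hard_pos_tour k : hard_pos w (hard_tour k) = k.
Proof. by have /(congr1 val) := permKV (perm hard_ord_inj) k; rewrite permE. Qed.

Lemma nth_hard_tour t : (t <= n)%N -> nth (init H) (tour H hard_tour) t = t :> nat.
Proof.
case: t => [|t] tn; first exact: val_hard_init.
rewrite /= (nth_map (Ordinal n_gt0)) ?size_enum_ord //.
by rewrite val_hard_rst // hard_pos_tour nth_enum_ord.
Qed.

Lemma hard_OPT_ge : \sum_(j < m) g ^+ j.+1 <= OPT H g.
Proof.
apply: le_trans (le_bigmax _ _ hard_tour).
rewrite (big_ord_widen n (fun j => g ^+ j.+1) m_le_n) big_mkcond.
apply: ler_sum => j _; case: ifP => jm; last exact: exprn_ge0.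
apply: ler_wiXn2l => //.
apply: leq_trans (_ : \sum_(t < j.+1) 1 <= _)%N; last by rewrite sum_nat_const card_ord muln1.
apply: leq_sum => t _; have tm := leq_trans (ltn_ord t) jm.
apply: dist_le_reach; apply: reach_succ; rewrite hard_succE.
rewrite !nth_hard_tour ?hard_edge_chain //; lia.
Qed.

End HardOPT.

Lemma sum_rotation_window (R : numDomainType) (n m j : nat) :
  (0 < n)%N -> (m <= n)%N -> \sum_(w < n | ((j + w) %% n < m)%N) 1 = m%:R :> R.
Proof.
move=> n_gt0 m_le_n; pose f (w : 'I_n) : 'I_n := Ordinal (ltn_pmod (j + w) n_gt0).
have f_inj : injective f.
  move=> w w' /(congr1 val) /eqP; rewrite /= eqn_modDl !modn_small // => /eqP.
  exact: val_inj.
rewrite -(reindex_inj f_inj (P := fun k : 'I_n => (k < m)%N) (F := fun=> 1)) /=.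
by rewrite -(big_ord_widen n (fun=> 1) m_le_n) sumr_const card_ord.
Qed.

Lemma exists_light_rotation (R : realFieldType) (n m : nat) (p : 'I_n -> R) :
  (0 < n)%N -> (m <= n)%N -> \sum_j p j = 1 ->
  exists w, \sum_(j | (hard_pos w j < m)%N) p j <= m%:R / n%:R.
Proof.
move=> n_gt0 m_le_n p_sum1.
pose S (w : 'I_n) := \sum_(j | (hard_pos w j < m)%N) p j.
have S_sum : \sum_w S w = m%:R.
  rewrite /S; under eq_bigr do rewrite big_mkcond /=.
  rewrite exchange_big /= -[RHS]mul1r -{1}p_sum1 mulr_suml.
  apply: eq_bigr => j _; rewrite -big_mkcond /= -(sum_rotation_window R j n_gt0 m_le_n).
  by rewrite mulr_sumr; apply: eq_bigr => w _; rewrite mulr1.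
have [|w Sw] := exists_le_mean S; first by rewrite card_ord.
by exists w; rewrite card_ord S_sum in Sw.
Qed.

Section DiscountArithmetic.
Variables (R : realFieldType) (s : R) (n m : nat).
Hypothesis s_ge1 : 1 <= s.
Local Notation g := (1 - s^-1).

Let s_gt0 : 0 < s. Proof. exact: lt_le_trans ltr01 s_ge1. Qed.
Let inv_s_ge0 : 0 <= s^-1. Proof. by rewrite invr_ge0 ltW. Qed.
Let inv_s_le1 : s^-1 <= 1. Proof. by rewrite invf_le1. Qed.

Lemma disc_ge0 : 0 <= g.
Proof. by rewrite subr_ge0. Qed.

Lemma disc_lt1 : g < 1.
Proof. by rewrite ltrBlDr ltrDl invr_gt0. Qed.

Lemma disc_pow_bernoulli k : g ^+ k * (1 + k%:R / s) <= 1.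
Proof. by apply: bernoulli_le1; rewrite inv_s_ge0 inv_s_le1. Qed.

Hypothesis n_sq : n%:R = s ^+ 2.

Lemma disc_pow_n : g ^+ n * s <= 1.
Proof.
have := disc_pow_bernoulli n; rewrite n_sq expr2 mulfK ?gt_eqF //.
have := exprn_ge0 n disc_ge0; nra.
Qed.

Hypotheses (s_le_m : s <= m%:R) (m_le_2s : m%:R <= 2 * s).

Lemma disc_pow_m : g ^+ m * 2 <= 1.
Proof.
have := disc_pow_bernoulli m; have : 1 <= m%:R / s by rewrite ler_pdivlMr ?mul1r.
have := exprn_ge0 m disc_ge0; nra.
Qed.

Lemma hard_value_bound q : q <= m%:R / n%:R ->
  g + g ^+ n.+3 / (1 - g) + q * (g ^+ 2 / (1 - g)) <= 4 * g.
Proof.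
move=> q_le; have -> : 1 - g = s^-1 by ring.
rewrite invrK.
have g_ge0 := disc_ge0; have g_le1 := ltW disc_lt1.
have tail : g ^+ n.+3 * s <= g.
  rewrite -addn3 exprD mulrAC; apply: le_trans (_ : 1 * g ^+ 3 <= _).
    by rewrite ler_wpM2r ?exprn_ge0 ?disc_pow_n.
  by rewrite mul1r -[leRHS]expr1 ler_wiXn2l.
have qs : q * s <= 2.
  apply: le_trans (_ : m%:R / n%:R * s <= _); first by apply: ler_wpM2r => //; apply: ltW.
  have -> : m%:R / n%:R * s = m%:R / s by rewrite n_sq; field; rewrite gt_eqF.
  by rewrite ler_pdivrMr.
have : g ^+ 2 <= g by rewrite -[leRHS]expr1 ler_wiXn2l.
have : q * (g ^+ 2 * s) = g ^+ 2 * (q * s) by ring.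
have := exprn_ge0 2 g_ge0; nra.
Qed.

Lemma geom_sum_disc_ge : g * s / 2 <= \sum_(j < m) g ^+ j.+1.
Proof.
have geom : \sum_(j < m) g ^+ j = s * (1 - g ^+ m).
  have -> : 1 - g ^+ m = s^-1 * \sum_(j < m) g ^+ j by rewrite -opprB subrX1; ring.
  by rewrite mulrA mulfV ?mul1r // gt_eqF.
under eq_bigr do rewrite exprS.
rewrite -mulr_sumr geom mulrA; apply: ler_wpM2l; first by rewrite mulr_ge0 ?disc_ge0 ?ltW.
by have := disc_pow_m; lra.
Qed.

End DiscountArithmetic.

Unset Implicit Arguments.

Theorem theorem4 (R : realType) (n : nat) (hn : (0 < n)%N)
    (pi : local_policy R n) :
  exists M : crmdp n, valid_crmdp M /\
    value M (disc R n) pi / OPT M (disc R n) <= 8 / Num.sqrt (n%:R).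
Proof.
rewrite /disc; set s := Num.sqrt n%:R; set g := 1 - s^-1.
have s_ge1 : 1 <= s by rewrite -sqrtr1 ler_sqrt ?ler1n.
have s_gt0 : 0 < s := lt_le_trans ltr01 s_ge1.
have n_sq : n%:R = s ^+ 2 by rewrite sqr_sqrtr ?ler0n.
have [m m_le_n /andP [s_le_m m_le_2s]] := exists_nat_sqrt_bracket R hn.
have [w light] := exists_light_rotation hn m_le_n (lpol_sum1 pi 0 [::] finset.set0 [ffun=> g]).
exists (hard_mdp n m w); split; first exact: hard_mdp_valid.
have g_ge0 : 0 <= g := disc_ge0 s_ge1.
have value_le : value (hard_mdp n m w) g pi <= 4 * g.
  apply: le_trans (hard_value_le w pi hn m_le_n g_ge0 (disc_lt1 s_ge1)) _.
  exact: hard_value_bound s_ge1 n_sq m_le_2s _ light.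
have OPT_ge : g * s / 2 <= OPT (hard_mdp n m w) g.
  exact: le_trans (geom_sum_disc_ge s_ge1 s_le_m)
                  (hard_OPT_ge w hn m_le_n g_ge0 (ltW (disc_lt1 s_ge1))).
apply: divr_le_of_le_mul; first by rewrite divr_ge0 ?ltW.
  by apply: le_trans OPT_ge; rewrite divr_ge0 ?mulr_ge0 // ltW.
apply: le_trans value_le (le_trans _ (ler_wpM2l _ OPT_ge)); last by rewrite divr_ge0 ?ltW.
by rewrite /g [leRHS](_ : _ = 4 * (1 - s^-1)) //; field; rewrite gt_eqF.
Qed.
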